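(* Let $N,Q,S\ge 1$ be integers, let $\mathbf{H}\in\mathbb{R}^{Q\times N}$ with $\mathbf{H}\neq\mathbf{0}$, $\mathbf{y}\in\mathbb{R}^Q$, let $\mathbf{V}_0$ be a real matrix with $N$ columns, and for each $s\in\{1,\dots,S\}$ let $P_s\ge1$, $\mathbf{V}_s\in\mathbb{R}^{P_s\times N}$ and $\mathbf{c}_s\in\mathbb{R}^{P_s}$. Let $\Phi:\mathbb{R}^Q\to\mathbb{R}$ and, for every $\delta>0$ and $s\in\{1,\dots,S\}$, $\psi_{s,\delta}:\mathbb{R}\to\mathbb{R}$. For $\delta>0$ define $$F_\delta(\mathbf{x})=\Phi(\mathbf{H}\mathbf{x}-\mathbf{y})+\sum_{s=1}^S\psi_{s,\delta}(\|\mathbf{V}_s\mathbf{x}-\mathbf{c}_s\|)+\|\mathbf{V}_0\mathbf{x}\|^2,\qquad \mathbf{x}\in\mathbb{R}^N.$$ Assume: (i) $\Phi$ is continuous and coercive ($\lim_{\|\mathbf{z}\|\to+\infty}\Phi(\mathbf{z})=+\infty$); (ii) for every $\delta>0$ and every $s\in\{1,\dots,S\}$, $\psi_{s,\delta}$ is continuous and takes nonnegative values; (iii) $\operatorname{Ker}\mathbf{H}\cap\operatorname{Ker}\mathbf{V}_0=\{\mathbf{0}\}$. Then, for every $\delta>0$, (i) $F_\delta$ is coercive, and (ii) the set of minimizers of $F_\delta$ is nonempty and compact.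
   Context: $\|\cdot\|$ denotes the Euclidean norm. *)

From HB Require Import structures.
From mathcomp Require Import all_boot all_order all_algebra.
From mathcomp Require Import all_classical all_reals all_analysis.
Set Implicit Arguments. Unset Strict Implicit. Unset Printing Implicit Defensive.
Import Order.TTheory GRing.Theory Num.Theory.
Import numFieldNormedType.Exports.
Local Open Scope ring_scope.

Definition enorm (R : realType) (n : nat) (x : 'cV[R]_n) : R :=
  Num.sqrt (\sum_(i < n) (x i 0) ^+ 2).

Definition coercive (R : realType) (n : nat) (f : 'cV[R]_n -> R) : Prop :=
  forall M : R, exists r : R, forall z : 'cV[R]_n, r < enorm z -> M < f z.

Definition argmin_set (R : realType) (n : nat) (f : 'cV[R]_n -> R) : set 'cV[R]_n :=
  [set x | forall z, f x <= f z].

Definition F_obj (R : realType) (N Q S M0 : nat) (P : 'I_S -> nat)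
  (H : 'M[R]_(Q, N)) (y : 'cV[R]_Q) (V0 : 'M[R]_(M0, N))
  (V : forall s : 'I_S, 'M[R]_(P s, N)) (c : forall s : 'I_S, 'cV[R]_(P s))
  (Phi : 'cV[R]_Q -> R) (psi : R -> 'I_S -> R -> R) (delta : R)
  (x : 'cV[R]_N) : R :=
  Phi (H *m x - y) + \sum_(s < S) psi delta s (enorm (V s *m x - c s))
  + enorm (V0 *m x) ^+ 2.

From HB Require Import structures.
From mathcomp Require Import all_boot all_order all_algebra.
From mathcomp Require Import all_classical all_reals all_analysis.
From mathcomp Require Import lra.
Import Order.TTheory GRing.Theory Num.Theory.
Import numFieldNormedType.Exports.
Local Open Scope ring_scope.
Local Open Scope classical_set_scope.

Set Implicit Arguments.
Unset Strict Implicit.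
Unset Printing Implicit Defensive.

(* F_delta is continuous, and since the psi terms are nonnegative
   it dominates Phi(Hx - y) + ||V0 x||^2.  The kernel condition makes
   x |-> (Hx, V0 x) injective, hence ||x|| <= K (||Hx|| + ||V0 x||); so when
   ||x|| is large either ||Hx|| is large, and Phi(Hx - y) is large by
   coercivity, or ||V0 x|| is large while Phi stays bounded below.  A
   continuous coercive function has compact nonempty sublevel sets, so
   Weierstrass' theorem gives a minimizer, and the set of minimizers is the
   (compact) sublevel set at the minimum value. *)

Lemma lipschitz_continuous (R : realFieldType) (U V : normedModType R)
    (f : U -> V) (k : R) :
  (forall x z, `|f x - f z| <= k * `|x - z|) -> continuous f.
Proof.
move=> f_lip x; apply/cvgrPdist_lt => e e_gt0.
have k1_gt0 : 0 < `|k| + 1 by rewrite ltr_wpDl.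
near=> z; apply: le_lt_trans (f_lip x z) _.
have : `|x - z| < e / (`|k| + 1).
  by near: z; apply: cvgr_dist_lt => //; rewrite divr_gt0.
rewrite ltr_pdivlMr // => xz_small.
have : k * `|x - z| <= `|k| * `|x - z| by rewrite ler_wpM2r // ler_norm.
have := normr_ge0 (x - z); nra.
Unshelve. all: by end_near.
Qed.

Lemma mx_norm_entry_le (R : realDomainType) m n (A : 'M[R]_(m, n)) i j :
  `|A i j| <= `|A|.
Proof.
rewrite (_ : `|A| = mx_norm A) // mx_normrE.
by apply/bigmax_geP; right; exists (i, j).
Qed.

Lemma mx_norm_le (R : realDomainType) m n (A : 'M[R]_(m, n)) b :
  0 <= b -> (forall i j, `|A i j| <= b) -> `|A| <= b.
Proof.
move=> b_ge0 Ab; rewrite (_ : `|A| = mx_norm A) // mx_normrE.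
by apply/bigmax_leP; split => // -[i j].
Qed.

Lemma trmx_norm_le (R : realDomainType) m n (A : 'M[R]_(m, n)) : `|A^T| <= `|A|.
Proof. by apply: mx_norm_le => // i j; rewrite mxE mx_norm_entry_le. Qed.

Definition mx_abs_sum (R : realDomainType) m n (A : 'M[R]_(m, n)) : R :=
  \sum_i \sum_j `|A i j|.

Lemma mx_abs_sum_ge0 (R : realDomainType) m n (A : 'M[R]_(m, n)) :
  0 <= mx_abs_sum A.
Proof. by apply: sumr_ge0 => i _; apply: sumr_ge0. Qed.

Lemma mulmx_norm_le (R : realDomainType) m n p
    (A : 'M[R]_(m, n)) (B : 'M[R]_(n, p)) :
  `|A *m B| <= mx_abs_sum A * `|B|.
Proof.
apply: mx_norm_le => [|i k]; first by rewrite mulr_ge0 // mx_abs_sum_ge0.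
rewrite mxE; apply: le_trans (ler_norm_sum _ _ _) _.
apply: (@le_trans _ _ ((\sum_j `|A i j|) * `|B|)).
  rewrite mulr_suml; apply: ler_sum => j _; rewrite normrM.
  by rewrite ler_wpM2l // mx_norm_entry_le.
rewrite ler_wpM2r // /mx_abs_sum (bigD1 i) //= lerDl.
by apply: sumr_ge0 => i' _; apply: sumr_ge0.
Qed.

Lemma mulmx_continuous (R : realFieldType) m n p (A : 'M[R]_(m, n)) :
  continuous (fun B : 'M[R]_(n, p) => A *m B).
Proof.
by apply: (lipschitz_continuous (k := mx_abs_sum A)) => B C;
  rewrite -mulmxBr mulmx_norm_le.
Qed.

Lemma trmx_continuous (R : realFieldType) m n : continuous (@trmx R m n).
Proof.
by apply: (lipschitz_continuous (k := 1)) => A B;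
  rewrite mul1r -linearB trmx_norm_le.
Qed.

Lemma bounded_closed_compact_cV (R : realType) n (A : set 'cV[R]_n) b :
  (forall x, A x -> `|x| <= b) -> closed A -> compact A.
Proof.
move=> Ab A_closed.
have -> : A = trmx @` (trmx @^-1` A).
  apply/seteqP; split => [x Ax|_ [v Av <-] //].
  by exists x^T; rewrite /= trmxK.
apply: continuous_compact; first exact/continuous_subspaceT/trmx_continuous.
apply: bounded_closed_compact; last first.
  by apply: preimage_closed => // v _; apply: trmx_continuous.
exists b; split; first exact: num_real.
move=> M bM v Av /=; apply: le_trans (ltW bM).
by apply: le_trans (Ab _ Av); rewrite -[in leLHS](trmxK v) trmx_norm_le.
Qed.

Lemma enorm_ge0 (R : realType) n (x : 'cV[R]_n) : 0 <= enorm x.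
Proof. exact: sqrtr_ge0. Qed.

Lemma mx_norm_le_enorm (R : realType) n (x : 'cV[R]_n) : `|x| <= enorm x.
Proof.
apply: mx_norm_le => [|i j]; first exact: enorm_ge0.
rewrite (ord1 j) -sqrtr_sqr /enorm ler_sqrt; last first.
  by apply: sumr_ge0 => k _; rewrite sqr_ge0.
by rewrite (bigD1 i) //= lerDl; apply: sumr_ge0 => k _; rewrite sqr_ge0.
Qed.

Lemma enorm_le_mx_norm (R : realType) n (x : 'cV[R]_n) :
  enorm x <= n%:R * `|x|.
Proof.
have nx_ge0 : 0 <= n%:R * `|x| :> R by rewrite mulr_ge0.
rewrite -(ger0_norm nx_ge0) -sqrtr_sqr /enorm ler_sqrt ?sqr_ge0 //.
apply: (@le_trans _ _ (\sum_(i < n) `|x| ^+ 2)).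
  apply: ler_sum => i _; rewrite -(real_normK (num_real (x i 0))).
  by rewrite lerXn2r ?nnegrE // mx_norm_entry_le.
rewrite sumr_const card_ord -[leLHS]mulr_natl exprMn ler_wpM2r ?sqr_ge0 //.
by rewrite -natrX ler_nat; case: (n) => // k; rewrite expnS leq_pmulr.
Qed.

Lemma enorm_continuous (R : realType) n : continuous (@enorm R n).
Proof.
move=> x; apply: (continuous_comp _ (@sqrt_continuous R _)).
apply: (@continuous_big _ _ +%R 0 predT add_continuous _ _
  (fun i (z : 'cV[R]_n) => z i 0 ^+ 2)) => i _ z.
by under eq_fun do rewrite expr2; apply: continuousM; apply: coord_continuous.
Qed.

(* [coercive] is phrased with the Euclidean norm, whereas the topology on
   column vectors comes from the sup norm; the two are equivalent. *)
Lemma coerciveP (R : realType) n (f : 'cV[R]_n -> R) :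
  coercive f <-> forall M, exists r, forall z, r < `|z| -> M < f z.
Proof.
split=> f_coer M; have [r fr] := f_coer M.
  by exists r => z rz; apply: fr; apply: lt_le_trans (mx_norm_le_enorm z).
exists (n%:R * `|r|) => z /lt_le_trans /(_ (enorm_le_mx_norm z)) nz.
apply: fr; apply: le_lt_trans (ler_norm r) _.
have [n0|n_neq0] := eqVneq n 0%N.
  by move: nz; rewrite (_ : n%:R = 0) ?n0 // !mul0r ltxx.
by rewrite ltr_pM2l ?ltr0n ?lt0n in nz.
Qed.

Section Coercive.
Variables (R : realType) (n : nat) (f : 'cV[R]_n -> R).
Hypotheses (f_cont : continuous f) (f_coer : coercive f).

Lemma coercive_sublevel_compact a : compact [set x | f x <= a].
Proof.
have [r fr] := (coerciveP f).1 f_coer a.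
apply: (@bounded_closed_compact_cV _ _ _ `|r|) => [x /= fxa|].
  rewrite leNgt; apply/negP => /(le_lt_trans (ler_norm r)) /fr; lra.
rewrite -[X in closed X]/(f @^-1` [set t | t <= a]).
by apply: preimage_closed => [x _|]; [apply: f_cont | apply: closed_le].
Qed.

Lemma argmin_sublevel x : argmin_set f x -> argmin_set f = [set z | f z <= f x].
Proof.
move=> x_min; apply/seteqP; split => z /=; first exact.
by move=> fzx w; apply: le_trans fzx (x_min w).
Qed.

Lemma coercive_argmin : argmin_set f !=set0 /\ compact (argmin_set f).
Proof.
have [c c_in c_min] : exists2 c, c \in [set x | f x <= f 0] &
    forall x, x \in [set x | f x <= f 0] -> f c <= f x.
  apply: compact_EVT_min; first by exists 0 => /=.
    exact: coercive_sublevel_compact.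
  exact: continuous_subspaceT.
have c_argmin : argmin_set f c.
  move: c_in; rewrite inE /= => fc0 x.
  have [fx0|/ltW fx0] := leP (f x) (f 0); first by apply: c_min; rewrite inE.
  exact: le_trans fc0 fx0.
split; first by exists c.
by rewrite (argmin_sublevel c_argmin); apply: coercive_sublevel_compact.
Qed.

Lemma coercive_bounded_below : exists m, forall z, m <= f z.
Proof. by have [[c c_min] _] := coercive_argmin; exists (f c). Qed.

End Coercive.

Lemma kernel_trivial_norm_le (R : realFieldType) N Q M0
    (H : 'M[R]_(Q, N)) (V0 : 'M[R]_(M0, N)) :
  (forall x : 'cV[R]_N, H *m x = 0 -> V0 *m x = 0 -> x = 0) ->
  exists2 K, 0 <= K &
    forall x : 'cV[R]_N, `|x| <= K * (`|H *m x| + `|V0 *m x|).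
Proof.
move=> ker0; pose A := col_mx H V0.
have /row_freeP [B BA] : row_free A^T.
  apply: inj_row_free => v /(congr1 trmx); rewrite trmx_mul trmxK trmx0.
  rewrite mul_col_mx => /eqP; rewrite col_mx_eq0 => /andP[/eqP Hv /eqP V0v].
  by rewrite -[v]trmxK (ker0 _ Hv V0v) trmx0.
(* [B^T] is a left inverse of [A], which recovers [x] from [(Hx, V0 x)]. *)
have BA1 : B^T *m A = 1%:M by rewrite -[LHS]trmxK trmx_mul trmxK BA trmx1.
exists (mx_abs_sum (lsubmx B^T) + mx_abs_sum (rsubmx B^T)).
  by rewrite addr_ge0 // mx_abs_sum_ge0.
move=> x; have x_eq : x = lsubmx B^T *m (H *m x) + rsubmx B^T *m (V0 *m x).
  by rewrite -mul_row_col hsubmxK -mul_col_mx mulmxA BA1 mul1mx.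
rewrite [in leLHS]x_eq.
apply: le_trans (ler_normD _ _) _.
apply: le_trans (lerD (mulmx_norm_le _ _) (mulmx_norm_le _ _)) _.
by rewrite mulrDl lerD // ler_wpM2l ?mx_abs_sum_ge0 // ?lerDl ?lerDr.
Qed.

Lemma coercive_fit_quadratic (R : realType) N Q M0
    (H : 'M[R]_(Q, N)) (y : 'cV[R]_Q) (V0 : 'M[R]_(M0, N))
    (Phi : 'cV[R]_Q -> R) (m : R) :
  coercive Phi -> (forall z, m <= Phi z) ->
  (forall x : 'cV[R]_N, H *m x = 0 -> V0 *m x = 0 -> x = 0) ->
  coercive (fun x => Phi (H *m x - y) + `|V0 *m x| ^+ 2).
Proof.
move=> /coerciveP Phi_coer Phi_ge ker0; apply/coerciveP => M.
have [r Phi_r] := Phi_coer M.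
have [K K_ge0 x_le] := kernel_trivial_norm_le ker0.
pose a := `|y| + `|r|; pose t := Num.max (M - m) 1.
exists (K * (a + t)) => x x_large.
have V0x2_ge0 := sqr_ge0 `|V0 *m x|.
have [Hx_large|Hx_small] := ltP a `|H *m x|.
  suff : M < Phi (H *m x - y) by lra.
  apply: Phi_r; have := ler_normD (H *m x - y) y; rewrite subrK.
  have := ler_norm r; rewrite /a in Hx_large; lra.
have [V0x_large|V0x_small] := ltP t `|V0 *m x|.
  have t_ge1 : 1 <= t by rewrite le_max lexx orbT.
  have t_ge : M - m <= t by rewrite le_max lexx.
  have : `|V0 *m x| <= `|V0 *m x| ^+ 2.
    by rewrite expr2 ler_peMl // ltW // (le_lt_trans t_ge1).
  have := Phi_ge (H *m x - y); lra.
have := x_le x; have : K * (`|H *m x| + `|V0 *m x|) <= K * (a + t).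
  by rewrite ler_wpM2l //; lra.
lra.
Qed.

Lemma coercive_le (R : realType) n (g f : 'cV[R]_n -> R) :
  (forall x, g x <= f x) -> coercive g -> coercive f.
Proof.
move=> gf g_coer M; have [r gr] := g_coer M.
by exists r => z /gr /lt_le_trans; apply.
Qed.

Lemma F_obj_continuous (R : realType) (N Q S M0 : nat) (P : 'I_S -> nat)
  (H : 'M[R]_(Q, N)) (y : 'cV[R]_Q) (V0 : 'M[R]_(M0, N))
  (V : forall s : 'I_S, 'M[R]_(P s, N)) (c : forall s : 'I_S, 'cV[R]_(P s))
  (Phi : 'cV[R]_Q -> R) (psi : R -> 'I_S -> R -> R) (delta : R) :
  continuous Phi -> (forall s, continuous (psi delta s)) ->
  continuous (@F_obj R N Q S M0 P H y V0 V c Phi psi delta).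
Proof.
move=> Phi_cont psi_cont x.
have affine_cont m (A : 'M[R]_(m, N)) (b : 'cV[R]_m) :
    continuous (fun z => A *m z - b).
  move=> z; apply: (@continuousB _ _ _ (fun z => A *m z) (fun=> b)).
    exact: mulmx_continuous.
  exact: cst_continuous.
have fit_cont : {for x, continuous (fun z => Phi (H *m z - y))}.
  exact: continuous_comp (affine_cont _ _ _ _) (Phi_cont _).
have psi_sum_cont : {for x, continuous
    (fun z => \sum_(s < S) psi delta s (enorm (V s *m z - c s)))}.
  apply: (@continuous_big _ _ +%R 0 predT add_continuous _ _
    (fun s z => psi delta s (enorm (V s *m z - c s)))) => s _ z.
  apply: (continuous_comp (f := fun z => enorm (V s *m z - c s))) (psi_cont s _).
  by apply: continuous_comp; [apply: affine_cont | apply: enorm_continuous].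
have quad_cont : {for x, continuous (fun z => enorm (V0 *m z) * enorm (V0 *m z))}.
  have V0_cont : {for x, continuous (fun z => enorm (V0 *m z))}.
    by apply: continuous_comp; [apply: mulmx_continuous | apply: enorm_continuous].
  exact: (continuousM V0_cont V0_cont).
exact: continuousD (continuousD fit_cont psi_sum_cont) quad_cont.
Qed.

Theorem proposition1 (R : realType) (N Q S M0 : nat) (P : 'I_S -> nat)
  (H : 'M[R]_(Q, N)) (y : 'cV[R]_Q) (V0 : 'M[R]_(M0, N))
  (V : forall s : 'I_S, 'M[R]_(P s, N)) (c : forall s : 'I_S, 'cV[R]_(P s))
  (Phi : 'cV[R]_Q -> R) (psi : R -> 'I_S -> R -> R) :
  (1 <= N)%N -> (1 <= Q)%N -> (1 <= S)%N ->
  (forall s, (1 <= P s)%N) ->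
  H != 0 ->
  continuous Phi -> coercive Phi ->
  (forall delta : R, 0 < delta -> forall s : 'I_S,
      continuous (psi delta s) /\ (forall t : R, 0 <= psi delta s t)) ->
  (forall x : 'cV[R]_N, H *m x = 0 -> V0 *m x = 0 -> x = 0) ->
  forall delta : R, 0 < delta ->
    coercive (@F_obj R N Q S M0 P H y V0 V c Phi psi delta) /\
    (argmin_set (@F_obj R N Q S M0 P H y V0 V c Phi psi delta) !=set0 /\
     compact (argmin_set (@F_obj R N Q S M0 P H y V0 V c Phi psi delta))).
Proof.
move=> _ _ _ _ _ Phi_cont Phi_coer psi_prop ker0 delta delta_gt0.
have psi_cont s : continuous (psi delta s) by have [] := psi_prop _ delta_gt0 s.
have psi_ge0 s t : 0 <= psi delta s t by have [_] := psi_prop _ delta_gt0 s.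
set F := F_obj _ _ _ _ _ _ _ _.
have F_cont : continuous F by apply: F_obj_continuous.
have [m Phi_ge] := coercive_bounded_below Phi_cont Phi_coer.
have F_coer : coercive F.
  apply: coercive_le (coercive_fit_quadratic y Phi_coer Phi_ge ker0) => x.
  rewrite /F /F_obj -addrA lerD2l -[leLHS]add0r lerD //.
    by apply: sumr_ge0 => s _; apply: psi_ge0.
  by rewrite lerXn2r ?nnegrE ?enorm_ge0 // mx_norm_le_enorm.
by split => //; apply: coercive_argmin.
Qed.
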